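(* The space $\mathcal{X}$ of mm-isomorphism classes of mm-spaces, equipped with the box topology, is not $\sigma$-compact.
   Context: An mm-space is a triple $(X,d_X,\mu_X)$ where $(X,d_X)$ is a complete separable metric space and $\mu_X$ is a Borel probability measure on $X$. Two mm-spaces $X,Y$ are mm-isomorphic if there is an isometry $f\colon \operatorname{supp}\mu_X\to\operatorname{supp}\mu_Y$ with $f_*\mu_X=\mu_Y$; $\mathcal{X}$ is the set of mm-isomorphism classes. A parameter of $X$ is a Borel map $\varphi\colon [0,1)\to X$ with $\varphi_*\mathcal{L}^1=\mu_X$. The box distance $\square(X,Y)$ is the infimum of $\varepsilon\ge 0$ such that there exist parameters $\varphi$ of $X$, $\psi$ of $Y$ and a Borel set $I_0\subset[0,1)$ with $\mathcal{L}^1(I_0)\ge 1-\varepsilon$ and $|d_X(\varphi(s),\varphi(t))-d_Y(\psi(s),\psi(t))|\le\varepsilon$ for all $s,t\in I_0$; it is a metric on $\mathcal{X}$ and induces the box topology. *)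

From HB Require Import structures.
From mathcomp Require Import all_boot all_order all_algebra.
From mathcomp Require Import all_classical all_reals all_analysis.
Set Implicit Arguments. Unset Strict Implicit. Unset Printing Implicit Defensive.
Import Order.TTheory GRing.Theory Num.Theory.
Local Open Scope classical_set_scope.
Local Open Scope ring_scope.

Section MM.
Variable R : realType.

Definition is_metric (X : Type) (d : X -> X -> R) : Prop :=
  [/\ forall x y, 0 <= d x y,
      forall x y, d x y = 0 <-> x = y,
      forall x y, d x y = d y x &
      forall x y z, d x z <= d x y + d y z].

Definition d_cauchy (X : Type) (d : X -> X -> R) (u : nat -> X) : Prop :=
  forall e : R, 0 < e -> exists N : nat, forall m n, (N <= m)%N -> (N <= n)%N ->
    d (u m) (u n) < e.

Definition d_converges (X : Type) (d : X -> X -> R) (u : nat -> X) (x : X) : Prop :=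
  forall e : R, 0 < e -> exists N : nat, forall n, (N <= n)%N -> d (u n) x < e.

Definition d_complete (X : Type) (d : X -> X -> R) : Prop :=
  forall u : nat -> X, d_cauchy d u -> exists x, d_converges d u x.

Definition d_separable (X : Type) (d : X -> X -> R) : Prop :=
  exists s : nat -> X, forall x (e : R), 0 < e -> exists n, d x (s n) < e.

Definition d_open (X : Type) (d : X -> X -> R) (A : set X) : Prop :=
  forall x, A x -> exists2 r : R, 0 < r & [set y | d x y < r] `<=` A.

Record mmspace := MMSpace {
  mm_disp : measure_display;
  mm_carrier : measurableType mm_disp;
  mm_dist : mm_carrier -> mm_carrier -> R;
  mm_metric : is_metric mm_dist;
  mm_complete : d_complete mm_dist;
  mm_separable : d_separable mm_dist;
  mm_borel : (@measurable _ mm_carrier) = <<s d_open mm_dist >>;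
  mm_measure : probability mm_carrier R
}.

Definition I01 : set R := [set t | 0 <= t < 1].

Definition is_parameter (X : mmspace) (phi : R -> mm_carrier X) : Prop :=
  measurable_fun I01 phi /\
  forall A : set (mm_carrier X), measurable A ->
    (@lebesgue_measure R) (I01 `&` phi @^-1` A) = mm_measure X A.

Definition box (X Y : mmspace) : R :=
  inf [set e : R | 0 <= e /\
    exists (phi : R -> mm_carrier X) (psi : R -> mm_carrier Y) (I0 : set R),
      [/\ is_parameter phi /\ is_parameter psi,
          measurable I0, I0 `<=` I01,
          ((1 - e)%:E <= (@lebesgue_measure R) I0)%E &
          forall s t, I0 s -> I0 t ->
            `| mm_dist (phi s) (phi t) - mm_dist (psi s) (psi t) | <= e]].

(** Open sets and compact sets for the box topology (topology induced by
    the box (pseudo)metric on mm-spaces; it is the pullback of the box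
    topology on the quotient by mm-isomorphism). *)
Definition box_open (U : mmspace -> Prop) : Prop :=
  forall X, U X -> exists2 r : R, 0 < r & forall Y, box X Y < r -> U Y.

Definition box_compact (K : mmspace -> Prop) : Prop :=
  forall (I : Type) (U : I -> mmspace -> Prop),
    (forall i, box_open (U i)) -> (forall X, K X -> exists i, U i X) ->
    exists2 J : set I, finite_set J &
      forall X, K X -> exists2 i, J i & U i X.

Definition box_sigma_compact : Prop :=
  exists K : nat -> mmspace -> Prop,
    (forall n, box_compact (K n)) /\ forall X : mmspace, exists n, K n X.

End MM.

From HB Require Import structures.
From mathcomp Require Import all_boot all_order all_algebra.
From mathcomp Require Import all_classical all_reals all_analysis.
From mathcomp Require Import lra.
Import Order.TTheory GRing.Theory Num.Theory.
Import numFieldNormedType.Exports.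
Local Open Scope classical_set_scope.
Local Open Scope ring_scope.

(** A box-compact set of mm-spaces is covered by finitely many of the box-open
    sets "some part of measure > 1 - eps has diameter < m", so for each eps its
    members have such parts with diameter below a common bound.  If compact sets
    K_n covered everything, with bounds M_n for eps = 2^-(n+2), the space nat
    with weights 2^-(k+1) and distance arm i + arm j (i <> j), arm (n+1) = M_n + 1,
    would lie in some K_n; but a part of measure > 1 - 2^-(n+2) contains 0 and
    n+1, which are at distance M_n + 2.

    Box-openness needs a parameter of every mm-space.  Code a point by the
    indices of the first points of a dense sequence within 1/(k+1) of it,
    k = 0, 1, ...; lay the cells of equal codes out on [0,1) lexicographically as
    intervals of the same measure, and send t to the limit of the dense-sequence
    points of the cells containing t.  A cell and its interval have the same
    measure, and the preimage of an open set is squeezed between unions of such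
    intervals, so the image of Lebesgue measure agrees with the given measure on
    open sets, hence on all Borel sets. *)

Section measure_eventually.
Context {d} {T : measurableType d} {R : realType} (mu : {measure set T -> \bar R}).

Lemma measure_le_eventually (A : set T) (W : (set T)^nat) (c : \bar R) :
  measurable A -> (forall k, measurable (W k)) ->
  (forall x, A x -> exists K, forall k, (K <= k)%N -> W k x) ->
  (forall k, (mu (W k) <= c)%E) -> (mu A <= c)%E.
Proof.
move=> mA mW evW muW.
pose V K := A `&` \bigcap_(k in [set k | (K <= k)%N]) W k.
have mV K : measurable (V K).
  by apply: measurableI => //; apply: bigcap_measurable => //; exists K => /=.
have UV : \bigcup_K V K = A.
  apply/seteqP; split => x; first by move=> [K _ []].
  move=> Ax; have [K WK] := evW x Ax; exists K => //; split => // k /= /WK.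
have ndV : nondecreasing_seq V.
  move=> K K' KK'; apply/subsetPset => x [Ax WKx].
  by split => // k /= K'k; apply: WKx; exact: leq_trans K'k.
have mUV : measurable (\bigcup_K V K) by rewrite UV.
have := nondecreasing_cvg_mu (mu := mu) mV mUV ndV; rewrite UV => cvgV.
rewrite -(cvg_lim (@ereal_hausdorff R) cvgV).
apply: lime_le; first by apply/cvg_ex; exists (mu A).
apply: nearW => K /=; apply: le_trans (muW K); apply: le_measure; rewrite ?inE //.
by move=> x [_]; apply => /=.
Qed.

End measure_eventually.

Section code_cells.
Context {d} {T : measurableType d} {R : realType} (mu : {measure set T -> \bar R}).
Variables (D : set T) (code : nat -> T -> seq nat) (cell : seq nat -> set T).
Hypothesis size_code : forall k x, size (code k x) = k.
Hypothesis cellP : forall a x, cell a x <-> D x /\ code (size a) x = a.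
Hypothesis measurable_cell : forall a, measurable (cell a).

(* Codes are enumerated through [pickle], so that countable additivity over [nat]
   applies. *)
Definition codes_of_size (k : nat) (P : seq nat -> Prop) : set nat :=
  [set n | exists2 a, pickle_inv n = Some a & size a = k /\ P a].

Definition pickled_cell (n : nat) : set T :=
  if pickle_inv n is Some a then cell a else set0.

Lemma measurable_pickled_cell n : measurable (pickled_cell n).
Proof. by rewrite /pickled_cell; case: pickle_inv. Qed.

Lemma code_preimageE k P :
  [set x | D x /\ P (code k x)] = \bigcup_(n in codes_of_size k P) pickled_cell n.
Proof.
apply/seteqP; split => x.
  move=> [Dx Px]; exists (pickle (code k x)).
    by exists (code k x); rewrite ?pickleK_inv ?size_code.
  by rewrite /pickled_cell pickleK_inv; apply/cellP; rewrite size_code.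
move=> [n [a na [<- Pa]]]; rewrite /pickled_cell na => /cellP[Dx xa].
by split => //; rewrite xa.
Qed.

Lemma trivIset_pickled_cell k P : trivIset (codes_of_size k P) pickled_cell.
Proof.
move=> n1 n2 [a1 na1 [sa1 _]] [a2 na2 [sa2 _]] [x []].
rewrite /pickled_cell na1 na2 => /cellP[_ xa1] /cellP[_ xa2].
have a12 : a1 = a2 by rewrite -xa1 -xa2 sa1 sa2.
have := @pickle_invK (seq nat) n1; have := @pickle_invK (seq nat) n2.
by rewrite na1 na2 /= a12 => ->.
Qed.

Lemma measurable_code_preimage k P : measurable [set x | D x /\ P (code k x)].
Proof.
by rewrite code_preimageE; apply: bigcup_measurable => n _; exact: measurable_pickled_cell.
Qed.

Lemma measure_code_preimage k P : mu [set x | D x /\ P (code k x)] =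
  (\sum_(n <oo | n \in codes_of_size k P) mu (pickled_cell n))%E.
Proof.
rewrite code_preimageE measure_bigcup //; last exact: trivIset_pickled_cell.
by move=> n _; exact: measurable_pickled_cell.
Qed.

End code_cells.

Section mm_metric.
Context {R : realType} {X : mmspace R}.
Local Notation T := (mm_carrier X).
Local Notation d := (@mm_dist R X).

Lemma mm_dist_ge0 (x y : T) : 0 <= d x y. Proof. by case: (mm_metric X). Qed.
Lemma mm_dist_eq0 (x y : T) : d x y = 0 <-> x = y. Proof. by case: (mm_metric X). Qed.
Lemma mm_distxx (x : T) : d x x = 0. Proof. exact/mm_dist_eq0. Qed.
Lemma mm_distC (x y : T) : d x y = d y x. Proof. by case: (mm_metric X). Qed.
Lemma mm_dist_triangle (x y z : T) : d x z <= d x y + d y z.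
Proof. by case: (mm_metric X). Qed.

Lemma measurable_d_open (A : set T) : d_open d A -> measurable A.
Proof. by move=> oA; rewrite (mm_borel X); exact: sub_sigma_algebra. Qed.

Lemma d_open_ball (x : T) r : d_open d [set y | d x y < r].
Proof.
move=> y /= xy; exists (r - d x y); first by rewrite subr_gt0.
by move=> z /=; have := mm_dist_triangle x y z; lra.
Qed.

Lemma measurable_ball (x : T) r : measurable [set y | d x y < r].
Proof. exact/measurable_d_open/d_open_ball. Qed.

Lemma d_openI : setI_closed (d_open d).
Proof.
move=> A B oA oB x [Ax Bx]; have [r1 r10 A1] := oA x Ax; have [r2 r20 B2] := oB x Bx.
exists (Num.min r1 r2); first by rewrite lt_min r10 r20.
by move=> y /=; rewrite lt_min => /andP[y1 y2]; split; [exact: A1 | exact: B2].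
Qed.

Definition d_closure (A : set T) : set T :=
  [set z | forall e, 0 < e -> exists2 y, A y & d z y < e].

Lemma measurable_d_closure (A : set T) : measurable (d_closure A).
Proof.
rewrite -(setCK (d_closure A)); apply/measurableC/measurable_d_open => z.
move=> /existsNP[e /not_implyP[e0 nAe]].
have e2 : 0 < e / 2 by lra.
exists (e / 2) => // y /= zy /(_ _ e2)[a Aa ya]; apply: nAe; exists a => //.
by have := mm_dist_triangle z y a; lra.
Qed.

End mm_metric.

Lemma I01_itv {R : realType} : @I01 R = [set` `[(0:R), 1[%R].
Proof. by apply/seteqP; split => t /=; rewrite in_itv. Qed.

Lemma measurable_I01 {R : realType} : measurable (@I01 R).
Proof. by rewrite I01_itv; exact: measurable_itv. Qed.

Section parameter.
Context {R : realType} (X : mmspace R).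
Local Notation T := (mm_carrier X).
Local Notation d := (@mm_dist R X).
Local Notation mu := (mm_measure X).
Local Notation leb := (@lebesgue_measure R).

Definition scale (k : nat) : R := k.+1%:R^-1.

Lemma scale_gt0 k : 0 < scale k.
Proof. by rewrite /scale invr_gt0 ltr0n. Qed.

Lemma le_scale k l : (k <= l)%N -> scale l <= scale k.
Proof. by move=> kl; rewrite /scale lef_pV2 ?posrE ?ltr0n // ler_nat ltnS. Qed.

Lemma scale_lt e : 0 < e -> exists k, scale k < e.
Proof.
move=> e0; have /archi_boundP e1 : 0 <= e^-1 by rewrite invr_ge0 ltW.
exists (Num.Def.archi_bound e^-1); rewrite /scale invf_plt ?posrE ?ltr0n //.
by apply: lt_le_trans e1 _; rewrite ler_nat.
Qed.

Definition net : nat -> T := projT1 (cid (mm_separable X)).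

Lemma netP x e : 0 < e -> exists n, d x (net n) < e.
Proof. exact: (projT2 (cid (mm_separable X))). Qed.

Lemma nearest_subproof k x : exists j, d x (net j) < scale k.
Proof. exact/netP/scale_gt0. Qed.

Definition nearest (k : nat) (x : T) : nat := ex_minn (nearest_subproof k x).

Lemma nearest_lt k x : d x (net (nearest k x)) < scale k.
Proof. by rewrite /nearest; case: ex_minnP. Qed.

Lemma nearest_min k x i : d x (net i) < scale k -> (nearest k x <= i)%N.
Proof. by rewrite /nearest; case: ex_minnP => m _ min_m /min_m. Qed.

Lemma measurable_nearest_eq k j : measurable [set x | nearest k x = j].
Proof.
have -> : [set x | nearest k x = j] = [set x | d (net j) x < scale k] `&`
    \bigcap_(i in [set i | (i < j)%N]) ~` [set x | d (net i) x < scale k].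
  apply/seteqP; split => x /=.
    move=> <-; split => [|i /= ij]; first by rewrite mm_distC nearest_lt.
    by rewrite mm_distC => /nearest_min; rewrite leqNgt ij.
  move=> [jx ij]; apply/eqP; rewrite eqn_leq nearest_min /=; last by rewrite mm_distC.
  by rewrite leqNgt; apply/negP => /ij; apply => /=; rewrite mm_distC; exact: nearest_lt.
apply: measurableI; first exact: measurable_ball.
case: j => [|j].
  by rewrite (_ : [set i | (i < 0)%N] = set0) ?bigcap_set0 //; apply/seteqP; split.
by apply: bigcap_measurable => [|i _]; [exists 0%N | exact/measurableC/measurable_ball].
Qed.

(* Finest scale first, so that [j :: b] refines [b]. *)
Fixpoint code (k : nat) (x : T) : seq nat :=
  if k is k'.+1 then nearest k' x :: code k' x else [::].

Lemma size_code k x : size (code k x) = k.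
Proof. by elim: k => //= k ->. Qed.

Definition cell (a : seq nat) : set T := [set x | code (size a) x = a].

Lemma cell_nil : cell [::] = setT. Proof. by apply/seteqP; split. Qed.

Lemma cell_cons j b : cell (j :: b) = [set x | nearest (size b) x = j] `&` cell b.
Proof. by apply/seteqP; split => x; rewrite /cell /= => -[-> ->]. Qed.

Lemma measurable_cell a : measurable (cell a).
Proof.
elim: a => [|j b ih]; first by rewrite cell_nil.
by rewrite cell_cons; apply: measurableI => //; exact: measurable_nearest_eq.
Qed.

Lemma cell_code k x : cell (code k x) x.
Proof. by rewrite /cell /= size_code. Qed.

Lemma cell_consW j b : cell (j :: b) `<=` cell b.
Proof. by rewrite cell_cons => x []. Qed.

Lemma cell_cons_dist j b x : cell (j :: b) x -> d x (net j) < scale (size b).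
Proof. by rewrite cell_cons => -[/= <- _]; exact: nearest_lt. Qed.

Lemma cell_bigcup b : cell b = \bigcup_j cell (j :: b).
Proof.
apply/seteqP; split => [x bx|x [j _]]; last exact: cell_consW.
by exists (nearest (size b) x) => //; rewrite cell_cons.
Qed.

Lemma trivIset_cell_cons b : trivIset setT (fun j => cell (j :: b)).
Proof.
apply/trivIsetP => i j _ _ ij; apply/seteqP; split => // x [].
by rewrite !cell_cons => -[/= xi _] [/= xj _]; move: ij; rewrite -xi -xj eqxx.
Qed.

Definition cell_mass (a : seq nat) : R := fine (mu (cell a)).

Lemma mu_cell a : mu (cell a) = (cell_mass a)%:E.
Proof.
by rewrite fineK // fin_num_measure //; exact: measurable_cell.
Qed.

Lemma cell_mass_ge0 a : 0 <= cell_mass a.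
Proof. by rewrite -lee_fin -mu_cell measure_ge0. Qed.

Lemma cell_mass_nil : cell_mass [::] = 1.
Proof. by rewrite /cell_mass cell_nil probability_setT. Qed.

Lemma cell_mass_gt0_nonempty a : 0 < cell_mass a -> cell a !=set0.
Proof.
by move=> a0; apply/set0P/negP => /eqP a_0; move: a0; rewrite /cell_mass a_0 measure0 ltxx.
Qed.

Definition children_mass (b : seq nat) (n : nat) : R :=
  \sum_(0 <= i < n) cell_mass (i :: b).

Lemma children_mass0 b : children_mass b 0 = 0.
Proof. by rewrite /children_mass big_geq. Qed.

Lemma children_massS b n :
  children_mass b n.+1 = children_mass b n + cell_mass (n :: b).
Proof. by rewrite /children_mass big_nat_recr. Qed.

Lemma nondecreasing_children_mass b : nondecreasing_seq (children_mass b).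
Proof.
apply/nondecreasing_seqP => n; rewrite children_massS lerDl; exact: cell_mass_ge0.
Qed.

Lemma children_mass_ge0 b n : 0 <= children_mass b n.
Proof. by rewrite -(children_mass0 b); exact: nondecreasing_children_mass. Qed.

Lemma children_mass_cvg b : children_mass b n @[n --> \oo] --> cell_mass b.
Proof.
have : (fun n => \sum_(0 <= i < n) mu (cell (i :: b))) @ \oo --> (cell_mass b)%:E.
  rewrite -mu_cell (cell_bigcup b); apply: measure_semi_sigma_additive.
  - by move=> j; exact: measurable_cell.
  - exact: trivIset_cell_cons.
  - by rewrite -cell_bigcup; exact: measurable_cell.
suff -> : children_mass b = fine \o (fun n => \sum_(0 <= i < n) mu (cell (i :: b))).
  exact: fine_cvg.
apply/funext => n /=.
by rewrite (eq_bigr (fun i => (cell_mass (i :: b))%:E)) ?sumEFin // => i _; exact: mu_cell.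
Qed.

Lemma children_mass_le b n : children_mass b n <= cell_mass b.
Proof.
rewrite -(cvg_lim (@Rhausdorff R) (children_mass_cvg b)).
apply: nondecreasing_cvgn_le; first exact: nondecreasing_children_mass.
by apply/cvg_ex; exists (cell_mass b); exact: children_mass_cvg.
Qed.

Lemma children_mass_gt b t : t < cell_mass b -> exists n, t < children_mass b n.
Proof.
move=> tb; have [N _ gtN] := cvgr_gt _ (children_mass_cvg b) _ tb.
by exists N; apply: gtN => /=.
Qed.

(* Cell [a] corresponds to the interval [[left_end a, right_end a[] of [0,1); the
   children [j :: b] tile the interval of [b] in increasing order of [j]. *)
Fixpoint left_end (a : seq nat) : R :=
  if a is j :: b then left_end b + children_mass b j else 0.

Definition right_end (a : seq nat) : R := left_end a + cell_mass a.

Lemma right_end_cons j b : right_end (j :: b) = left_end b + children_mass b j.+1.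
Proof. by rewrite /right_end /= children_massS addrA. Qed.

Lemma left_end_cons_ge j b : left_end b <= left_end (j :: b).
Proof. by rewrite /= lerDl children_mass_ge0. Qed.

Lemma right_end_cons_le j b : right_end (j :: b) <= right_end b.
Proof. by rewrite right_end_cons lerD2l children_mass_le. Qed.

Lemma left_end_ge0 a : 0 <= left_end a.
Proof. by elim: a => //= j b ih; exact: le_trans ih (left_end_cons_ge j b). Qed.

Lemma right_end_le1 a : right_end a <= 1.
Proof.
elim: a => [|j b ih]; first by rewrite /right_end cell_mass_nil add0r.
exact: le_trans (right_end_cons_le j b) ih.
Qed.

Definition next_index (t : R) (b : seq nat) : nat :=
  if pselect (exists j, t < right_end (j :: b)) is left ex then ex_minn ex else 0.

Lemma next_index_min t b j : t < right_end (j :: b) -> (next_index t b <= j)%N.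
Proof.
move=> tj; rewrite /next_index; case: pselect => [ex|/(_ (ex_intro _ j tj))//].
by case: ex_minnP => i _; apply.
Qed.

Lemma next_indexP t b : left_end b <= t < right_end b ->
  left_end (next_index t b :: b) <= t < right_end (next_index t b :: b).
Proof.
move=> /andP[bt tb].
have ex : exists j, t < right_end (j :: b).
  have [[|j] tj] : exists n, t - left_end b < children_mass b n.
    by apply: children_mass_gt; move: tb; rewrite /right_end; lra.
    by move: tj; rewrite children_mass0; lra.
  by exists j; rewrite right_end_cons; lra.
rewrite /next_index; case: pselect => [{}ex|/(_ ex)//].
case: ex_minnP => [[|i] ti imin]; first by rewrite /= children_mass0 addr0 bt.
rewrite ti andbT leNgt; apply/negP => ti'.
by have := imin i; rewrite right_end_cons ltnn => /(_ ti').
Qed.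

Fixpoint tcode (k : nat) (t : R) : seq nat :=
  if k is k'.+1 then next_index t (tcode k' t) :: tcode k' t else [::].

Lemma size_tcode k t : size (tcode k t) = k.
Proof. by elim: k => //= k ->. Qed.

Lemma tcode_itv k t : I01 t -> left_end (tcode k t) <= t < right_end (tcode k t).
Proof.
move=> /= /andP[t0 t1]; elim: k => [|k ih]; last exact: next_indexP.
by rewrite /right_end /= cell_mass_nil add0r t0 t1.
Qed.

Lemma tcodeE a t : left_end a <= t < right_end a -> tcode (size a) t = a.
Proof.
elim: a => [//|j b ih] /andP[jt tj].
have btb : left_end b <= t < right_end b.
  by rewrite (le_trans (left_end_cons_ge j b) jt) (lt_le_trans tj (right_end_cons_le j b)).
rewrite /= (ih btb); congr (_ :: _); apply/eqP; rewrite eqn_leq next_index_min //=.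
rewrite leqNgt; apply/negP => /(nondecreasing_children_mass b) le_mass.
have /andP[_] := next_indexP t b btb; rewrite right_end_cons.
by move: jt => /=; lra.
Qed.

Definition tcell (a : seq nat) : set R := [set t | I01 t /\ tcode (size a) t = a].

Lemma tcell_itv a : tcell a = [set` `[left_end a, right_end a[%R].
Proof.
apply/seteqP; split => t /=; rewrite in_itv /=; first by move=> [t01 <-]; exact: tcode_itv.
move=> ta; split; last exact: tcodeE.
have := left_end_ge0 a; have := right_end_le1 a; move: ta => /andP[a_t t_a] ? ?.
by apply/andP; split; lra.
Qed.

Lemma measurable_tcell a : measurable (tcell a).
Proof. by rewrite tcell_itv; exact: measurable_itv. Qed.

Lemma lebesgue_tcell a : leb (tcell a) = mu (cell a).
Proof.
rewrite tcell_itv lebesgue_measure_itv /= mu_cell /right_end.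
have := cell_mass_ge0 a; rewrite le_eqVlt => /orP[/eqP <-|a0]; first by rewrite addr0 ltxx.
by rewrite lte_fin ltrDl a0 EFinD addrAC subee // add0e.
Qed.

Let cellP a x : cell a x <-> setT x /\ code (size a) x = a.
Proof. by split => [|[]]. Qed.

Let code_setE k (P : seq nat -> Prop) :
  [set x | P (code k x)] = [set x | setT x /\ P (code k x)].
Proof. by apply/seteqP; split => x //= []. Qed.

Lemma measurable_code_set k (P : seq nat -> Prop) : measurable [set x | P (code k x)].
Proof.
by rewrite code_setE; exact: (measurable_code_preimage _ _ _ size_code cellP measurable_cell).
Qed.

Lemma measurable_tcode_set k (P : seq nat -> Prop) :
  measurable [set t | I01 t /\ P (tcode k t)].
Proof.
exact: (measurable_code_preimage _ _ _ size_tcode (fun _ _ => iff_refl _) measurable_tcell).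
Qed.

Lemma code_distribution k (P : seq nat -> Prop) :
  mu [set x | P (code k x)] = leb [set t | I01 t /\ P (tcode k t)].
Proof.
rewrite code_setE (measure_code_preimage mu _ _ _ size_code cellP measurable_cell).
rewrite (measure_code_preimage leb _ _ _ size_tcode (fun _ _ => iff_refl _) measurable_tcell).
apply: eq_eseriesr => n _; rewrite /pickled_cell; case: pickle_inv => [a|].
  exact/esym/lebesgue_tcell.
by rewrite !measure0.
Qed.

Definition tcenter (t : R) (k : nat) : T := net (next_index t (tcode k t)).

Lemma tcenter_near t k x : cell (tcode k.+1 t) x -> d x (tcenter t k) < scale k.
Proof. by move=> /cell_cons_dist; rewrite size_tcode. Qed.

Lemma cell_tcode_neq0 t k : I01 t -> cell (tcode k t) !=set0.
Proof.
move=> t01; apply: cell_mass_gt0_nonempty.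
by have := tcode_itv k t t01; rewrite /right_end; lra.
Qed.

Lemma cell_tcode_mono t k l : (k <= l)%N -> cell (tcode l t) `<=` cell (tcode k t).
Proof.
elim: l => [|l ih]; first by rewrite leqn0 => /eqP ->.
rewrite leq_eqVlt => /orP[/eqP -> //|/ih kl x lx].
by apply: kl; exact: cell_consW lx.
Qed.

Lemma tcenter_dist t k l : I01 t -> (k <= l)%N ->
  d (tcenter t k) (tcenter t l) < scale k + scale l.
Proof.
move=> t01 kl; have [x lx] := cell_tcode_neq0 t l.+1 t01.
have kx := tcenter_near _ _ _ (cell_tcode_mono t _ _ (kl : (k.+1 <= l.+1)%N) _ lx).
have := tcenter_near _ _ _ lx; have := mm_dist_triangle (tcenter t k) x (tcenter t l).
by rewrite (mm_distC (tcenter t k) x); lra.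
Qed.

Lemma tcenter_cauchy t : I01 t -> d_cauchy d (tcenter t).
Proof.
move=> t01 e e0; have [N Ne] : exists N, scale N < e / 2 by apply: scale_lt; lra.
exists N => m n Nm Nn; have := le_scale _ _ Nm; have := le_scale _ _ Nn.
have [mn|nm] := leqP m n; first by have := tcenter_dist t _ _ t01 mn; lra.
by have := tcenter_dist t _ _ t01 (ltnW nm); rewrite mm_distC; lra.
Qed.

(* Junk outside [0,1), where [tcenter t] need not be Cauchy. *)
Definition param (t : R) : T := get [set x | d_converges d (tcenter t) x].

Lemma param_cvg t : I01 t -> d_converges d (tcenter t) (param t).
Proof. by move=> t01; apply: getPex; apply: mm_complete; exact: tcenter_cauchy. Qed.

Lemma param_near t k : I01 t -> d (tcenter t k) (param t) <= scale k.
Proof.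
move=> t01; apply/ler_addgt0Pr => e e0.
have [N Ne] := param_cvg t t01 (e / 2) (ltac:(lra)).
have [M Me] : exists M, scale M < e / 2 by apply: scale_lt; lra.
pose l := maxn k (maxn N M).
have kl : (k <= l)%N by rewrite leq_maxl.
have Nl : (N <= l)%N by rewrite (leq_trans (leq_maxl N M)) ?leq_maxr.
have Ml : (M <= l)%N by rewrite (leq_trans (leq_maxr N M)) ?leq_maxr.
have := tcenter_dist t _ _ t01 kl; have := Ne _ Nl; have := le_scale _ _ Ml.
by have := mm_dist_triangle (tcenter t k) (tcenter t l) (param t); lra.
Qed.

Lemma d_open_scale (U : set T) x : d_open d U -> U x ->
  exists K, forall k, (K <= k)%N -> [set y | d x y <= 2 * scale k] `<=` U.
Proof.
move=> oU Ux; have [r r0 rU] := oU x Ux.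
have [K Kr] : exists K, scale K < r / 2 by apply: scale_lt; lra.
by exists K => k Kk y /= xy; apply: rU => /=; have := le_scale _ _ Kk; lra.
Qed.

Definition head_ball_sub (U : set T) (k : nat) (a : seq nat) : Prop :=
  [set y | d (net (head 0%N a)) y <= scale k] `<=` U.

Lemma param_preimage_open (U : set T) : d_open d U ->
  [set t | I01 t /\ U (param t)] =
  \bigcup_k [set t | I01 t /\ head_ball_sub U k (tcode k.+1 t)].
Proof.
move=> oU; apply/seteqP; split => t; last first.
  by move=> [k _ [t01 kU]]; split => //; apply: kU; exact: param_near.
move=> [t01 Ut]; have [K KU] := d_open_scale _ _ oU Ut.
exists K => //; split => // y /= Ky; apply: (KU K (leqnn K)) => /=.
have := param_near t K t01; have := mm_dist_triangle (param t) (tcenter t K) y.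
by rewrite (mm_distC (param t) (tcenter t K)) /tcenter; lra.
Qed.

Lemma measurable_param_preimage_open (U : set T) : d_open d U ->
  measurable [set t | I01 t /\ U (param t)].
Proof.
move=> oU; rewrite param_preimage_open //; apply: bigcupT_measurable => k.
exact: measurable_tcode_set.
Qed.

Lemma measure_le_param_preimage_open (U : set T) : d_open d U ->
  (mu U <= leb [set t | I01 t /\ U (param t)])%E.
Proof.
move=> oU; apply: (measure_le_eventually mu _ _ _ (measurable_d_open _ oU)
  (fun k => measurable_code_set k.+1 (head_ball_sub U k))).
- move=> x Ux; have [K KU] := d_open_scale _ _ oU Ux; exists K => k Kk y /= ky.
  apply: (KU k Kk) => /=; have := nearest_lt k x.
  by have := mm_dist_triangle x (net (nearest k x)) y; lra.
- move=> k.
  apply: (le_trans (_ : _ <= leb [set t | I01 t /\ head_ball_sub U k (tcode k.+1 t)])%E).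
    by rewrite -code_distribution.
  apply: le_measure; rewrite ?inE.
  + exact: measurable_tcode_set.
  + exact: measurable_param_preimage_open.
  + by move=> t [t01 kU]; split => //; apply: kU; exact: param_near.
Qed.

Lemma param_preimage_open_le_measure (U : set T) : d_open d U ->
  (leb [set t | I01 t /\ U (param t)] <= mu U)%E.
Proof.
move=> oU; apply: (measure_le_eventually leb _ _ _ (measurable_param_preimage_open _ oU)
  (fun k => measurable_tcode_set k.+1 (fun a => cell a `<=` U))).
- move=> t [t01 Ut]; have [K KU] := d_open_scale _ _ oU Ut; exists K => k Kk.
  split => // x kx; apply: (KU k Kk) => /=.
  have := tcenter_near _ _ _ kx; have := param_near t k t01.
  have := mm_dist_triangle (param t) (tcenter t k) x.
  by rewrite (mm_distC (tcenter t k) (param t)) (mm_distC x (tcenter t k)); lra.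
- move=> k; apply: (le_trans (_ : _ <= mu [set x | cell (code k.+1 x) `<=` U])%E).
    by rewrite (code_distribution k.+1 (fun a => cell a `<=` U)).
  apply: le_measure; rewrite ?inE.
  + exact: (measurable_code_set k.+1 (fun a => cell a `<=` U)).
  + exact: measurable_d_open _ oU.
  + by move=> x; apply; exact: cell_code.
Qed.

Lemma measurable_param : measurable_fun (@I01 R) param.
Proof.
apply: (measurability (d_open d) (mm_borel X)) => _ [U oU <-].
exact: measurable_param_preimage_open.
Qed.

Definition param_measure (A : set T) : \bar R := leb (@I01 R `&` param @^-1` A).

Let param_measure0 : param_measure set0 = 0%E.
Proof. by rewrite /param_measure preimage_set0 setI0 measure0. Qed.

Let param_measure_ge0 A : (0 <= param_measure A)%E.
Proof. exact: measure_ge0. Qed.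

Let param_measure_semi_sigma_additive : semi_sigma_additive param_measure.
Proof.
move=> F mF tF mUF; rewrite /param_measure preimage_bigcup setI_bigcupr.
apply: measure_semi_sigma_additive.
- by move=> n; apply: measurable_param; [exact: measurable_I01 | exact: mF].
- apply/trivIsetP => i j _ _ ij; move/trivIsetP : tF => /(_ i j I I ij) Fij.
  apply/seteqP; split => // t [[_ Fi] [_ Fj]].
  by have : (F i `&` F j) (param t) by []; rewrite Fij.
- apply: bigcup_measurable => n _.
  by apply: measurable_param; [exact: measurable_I01 | exact: mF].
Qed.

HB.instance Definition _ := isMeasure.Build _ _ _ param_measure
  param_measure0 param_measure_ge0 param_measure_semi_sigma_additive.

Lemma param_measure_open (U : set T) : d_open d U -> param_measure U = mu U.
Proof.
move=> oU; apply/eqP; rewrite eq_le.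
by rewrite param_preimage_open_le_measure // measure_le_param_preimage_open.
Qed.

Lemma is_parameter_param : is_parameter param.
Proof.
split=> [|A mA]; first exact: measurable_param.
rewrite -/(param_measure A); apply/esym.
apply: (measure_unique (d_open d) (fun=> setT) (mm_borel X) d_openI) => //.
- by move=> _ x _; exists 1.
- by apply/seteqP; split => // x _; exists 0%N.
- by move=> U oU; exact/esym/param_measure_open.
- by move=> _; apply: le_lt_trans (probability_le1 mu measurableT) _; rewrite ltry.
Qed.

End parameter.

Section box_witness.
Context {R : realType}.
Local Notation leb := (@lebesgue_measure R).

Lemma lebesgue_I01 : leb (@I01 R) = 1%E.
Proof.
by rewrite I01_itv lebesgue_measure_itv /= lte_fin ltr01 -EFinB subr0.
Qed.

Lemma lebesgue_sub_I01E (B : set R) : measurable B -> B `<=` @I01 R ->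
  leb B = (fine (leb B))%:E.
Proof.
move=> mB BI; rewrite fineK // ge0_fin_numE ?measure_ge0 //.
apply: le_lt_trans (_ : leb (@I01 R) < +oo)%E; last by rewrite lebesgue_I01 ltry.
by apply: le_measure; rewrite ?inE //; exact: measurable_I01.
Qed.

Lemma lebesgue_setI_large (I0 B : set R) e : measurable I0 -> measurable B ->
  I0 `<=` @I01 R -> B `<=` @I01 R -> ((1 - e)%:E <= leb I0)%E ->
  fine (leb B) <= fine (leb (I0 `&` B)) + e.
Proof.
move=> mI0 mB I0I BI I0e.
have mI0B : measurable (I0 `&` B) by exact: measurableI.
have mI := @measurable_I01 R.
have mI0c : measurable (@I01 R `\` I0) by exact: measurableD.
have I0cE : leb (@I01 R `\` I0) = (1 - fine (leb I0))%:E.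
  transitivity (leb (@I01 R) - leb (@I01 R `&` I0))%E.
    have I01_fin : (leb (@I01 R) < +oo)%E by rewrite lebesgue_I01 ltry.
    by apply: measureD.
  by rewrite lebesgue_I01 setIidr // (lebesgue_sub_I01E _ mI0 I0I) EFinB.
have : (leb B <= leb (I0 `&` B) + leb (@I01 R `\` I0))%E.
  apply: le_trans (measureU2 leb mI0B mI0c); apply: le_measure; rewrite ?inE //.
    exact: measurableU.
  by move=> t Bt; have [I0t|I0t] := pselect (I0 t); [left | right; split => //; exact: BI].
rewrite I0cE (lebesgue_sub_I01E _ mB BI) (lebesgue_sub_I01E _ mI0B (fun t tI => BI t tI.2)).
rewrite -EFinD lee_fin; move: I0e; rewrite (lebesgue_sub_I01E _ mI0 I0I) lee_fin; lra.
Qed.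

Lemma box_lt (Y Z : mmspace R) r : box Y Z < r -> exists2 e, e < r &
  exists (phi : R -> mm_carrier Y) (psi : R -> mm_carrier Z) (I0 : set R),
    [/\ is_parameter phi /\ is_parameter psi, measurable I0, I0 `<=` @I01 R,
        ((1 - e)%:E <= leb I0)%E &
        forall s t, I0 s -> I0 t ->
          `| mm_dist (phi s) (phi t) - mm_dist (psi s) (psi t) | <= e].
Proof.
(* Since [inf set0 = 0], the existence of parameters is needed here. *)
move=> YZr; have [|e [_ eYZ] er] := inf_lt _ YZr; last by exists e.
exists 1; split => //; exists (param Y), (param Z), set0.
by split => //; rewrite ?subrr ?measure0 //; split; exact: is_parameter_param.
Qed.

End box_witness.

Section bulk.
Context {R : realType}.
Local Notation leb := (@lebesgue_measure R).

Definition bulk_diam_lt (eps : R) (m : nat) (Y : mmspace R) : Prop :=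
  exists2 A : set (mm_carrier Y), measurable A /\ ((1 - eps)%:E < mm_measure Y A)%E &
    exists2 D : R, D < m%:R & forall a b, A a -> A b -> mm_dist a b <= D.

Lemma bulk_diam_ltW eps m m' Y : (m <= m')%N -> bulk_diam_lt eps m Y -> bulk_diam_lt eps m' Y.
Proof.
move=> mm' [A mA [D Dm diamA]]; exists A => //; exists D => //.
by apply: lt_le_trans Dm _; rewrite ler_nat.
Qed.

Lemma bulk_diam_lt_exists eps (Y : mmspace R) : 0 < eps -> exists m, bulk_diam_lt eps m Y.
Proof.
move=> eps0; pose y0 : mm_carrier Y := point.
pose B k := [set y | mm_dist y0 y < k%:R].
have mB k : measurable (B k) by exact: measurable_ball.
have [k Bk] : exists k, ((1 - eps)%:E < mm_measure Y (B k))%E.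
  apply/not_existsP => Bsmall; suff : (mm_measure Y setT <= (1 - eps)%:E)%E.
    by rewrite probability_setT lee_fin; lra.
  apply: (measure_le_eventually _ _ B _ measurableT mB).
    move=> y _; exists (Num.Def.archi_bound (mm_dist y0 y)) => k lek.
    apply: lt_le_trans (archi_boundP (mm_dist_ge0 y0 y)) _; by rewrite ler_nat.
  by move=> k; rewrite leNgt; apply/negP; exact: Bsmall.
exists (2 * k).+1, (B k); first by split.
exists (2 * k%:R); first by rewrite -natrM ltr_nat.
move=> a b; rewrite /B /= => y0a y0b; have := mm_dist_triangle a y0 b.
by rewrite (mm_distC a y0); lra.
Qed.

Lemma box_transport_bulk (Y Z : mmspace R) (phi : R -> mm_carrier Y)
    (psi : R -> mm_carrier Z) (I0 : set R) e (A : set (mm_carrier Y)) D :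
  is_parameter phi -> is_parameter psi -> measurable I0 -> I0 `<=` @I01 R ->
  ((1 - e)%:E <= leb I0)%E ->
  (forall s t, I0 s -> I0 t -> `|mm_dist (phi s) (phi t) - mm_dist (psi s) (psi t)| <= e) ->
  measurable A -> (forall a b, A a -> A b -> mm_dist a b <= D) ->
  exists2 B : set (mm_carrier Z),
    measurable B /\ ((fine (mm_measure Y A) - e)%:E <= mm_measure Z B)%E &
    forall a b, B a -> B b -> mm_dist a b <= D + e.
Proof.
move=> [mphi phiE] [mpsi psiE] mI0 I0I I0e dI0 mA diamA.
have mI := @measurable_I01 R.
have mphiA : measurable (@I01 R `&` phi @^-1` A) by exact: mphi.
pose S := I0 `&` (@I01 R `&` phi @^-1` A).
have mS : measurable S by exact: measurableI.
have := lebesgue_setI_large _ _ _ mI0 mphiA I0I (fun t tI => tI.1) I0e.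
rewrite phiE // -/S => AS.
(* The closure makes the transported part measurable. *)
exists (d_closure (psi @` S)); first split.
- exact: measurable_d_closure.
- rewrite -psiE; last exact: measurable_d_closure.
  apply: (@le_trans _ _ (leb S)).
    by rewrite (lebesgue_sub_I01E _ mS (fun t tS => I0I t tS.1)) lee_fin; lra.
  apply: le_measure; rewrite ?inE //; first by apply: mpsi => //; exact: measurable_d_closure.
  move=> s Ss; split; first exact: I0I Ss.1.
  by move=> eta eta0; exists (psi s); [exists s | rewrite mm_distxx].
- move=> z1 z2 z1S z2S; apply/ler_addgt0Pr => eta eta0.
  have [_ [s1 Ss1 <-] z1s1] := z1S _ (ltac:(lra) : 0 < eta / 2).
  have [_ [s2 Ss2 <-] z2s2] := z2S _ (ltac:(lra) : 0 < eta / 2).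
  have := dI0 s1 s2 Ss1.1 Ss2.1; rewrite ler_norml => /andP[dpsi _].
  have := diamA _ _ Ss1.2.2 Ss2.2.2.
  have := mm_dist_triangle z1 (psi s1) z2; have := mm_dist_triangle (psi s1) (psi s2) z2.
  by rewrite (mm_distC (psi s2) z2); lra.
Qed.

Lemma box_open_bulk_diam_lt eps m : box_open (bulk_diam_lt eps m).
Proof.
move=> Y [A [mA YA] [D Dm diamA]].
have YAE : mm_measure Y A = (fine (mm_measure Y A))%:E by rewrite fineK ?fin_num_measure.
set a := fine (mm_measure Y A) in YAE *.
have epsa : 1 - eps < a by move: YA; rewrite YAE lte_fin.
exists (Num.min ((a - (1 - eps)) / 2) ((m%:R - D) / 2)) => [|Z].
  by rewrite lt_min; apply/andP; split; lra.
move=> /box_lt[e]; rewrite lt_min => /andP[ea eD].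
move=> [phi [psi [I0 [[pphi ppsi] mI0 I0I I0e dI0]]]].
have [B [mB ZB] diamB] :=
  box_transport_bulk _ _ _ _ _ _ _ _ pphi ppsi mI0 I0I I0e dI0 mA diamA.
move: ZB; rewrite YAE /= => ZB.
exists B; first by split => //; apply: lt_le_trans ZB; rewrite lte_fin; lra.
by exists (D + e) => //; lra.
Qed.

Lemma box_compact_bulk_diam_bounded eps (K : mmspace R -> Prop) : 0 < eps ->
  box_compact K -> exists M, forall Y, K Y -> bulk_diam_lt eps M Y.
Proof.
move=> eps0 /(_ nat (bulk_diam_lt eps) (box_open_bulk_diam_lt eps)) [].
  by move=> Y _; exact: bulk_diam_lt_exists.
move=> J /finite_seqP[s ->] KJ; exists (\max_(m <- s) m) => Y /KJ[m sm Ym].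
by apply: bulk_diam_ltW Ym; exact: leq_bigmax_seq.
Qed.

End bulk.

Section star_space.
Context {R : realType}.

Definition weight (k : nat) : R := 1 / (2 ^ (k + 1))%:R.

Lemma weight_gt0 k : 0 < weight k.
Proof. by rewrite /weight divr_gt0 // ltr0n expn_gt0. Qed.

Lemma weight_le0 k : weight k <= weight 0.
Proof.
rewrite /weight !div1r lef_pV2 ?posrE ?ltr0n ?expn_gt0 // ler_nat.
by rewrite leq_pexp2l // leq_add2r.
Qed.

Definition weight_measure : {measure set nat -> \bar R} :=
  mseries (fun k => mscale (NngNum (ltW (weight_gt0 k))) \d_k) 0.

Lemma weight_measure_setT : weight_measure setT = 1%E.
Proof.
apply: (cvg_lim (@ereal_hausdorff R)).
have := @cvg_geometric_eseries_half R 1 0; rewrite expr0 divr1.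
apply: cvg_trans; apply: near_eq_cvg; apply: nearW => n /=.
by apply: eq_bigr => k _; rewrite /mscale /= diracT mule1.
Qed.

Lemma weight_measure_ge k : ((weight k)%:E <= weight_measure [set k])%E.
Proof.
rewrite /weight_measure /mseries.
apply: le_trans (nneseries_lim_ge k.+1 _) => [|n _ _]; last exact: measure_ge0.
rewrite big_nat_recr //= /mscale /= diracE mem_set // mule1 leeDr //.
by apply: sume_ge0 => i _; apply: mule_ge0 => //; rewrite lee_fin ltW ?weight_gt0.
Qed.

Definition weight_prob : probability nat R := mnormalize weight_measure \d_0%N.

Lemma weight_probE A : weight_prob A = weight_measure A.
Proof.
rewrite /weight_prob /= /mnormalize weight_measure_setT /= invr1.
by case: ifPn => [/orP[]|_]; rewrite ?onee_eq0 ?mule1.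
Qed.

Lemma weight_prob_le (A : set nat) k : ~ A k -> (weight_prob A <= (1 - weight k)%:E)%E.
Proof.
move=> Ak; apply: (@le_trans _ _ (weight_prob (~` [set k]))).
  by apply: le_measure; rewrite ?inE // => x Ax /= xk; apply: Ak; rewrite -xk.
rewrite probability_setC // weight_probE EFinB; apply: leeB => //.
exact: weight_measure_ge.
Qed.

Variable M : nat -> nat.

Definition arm (i : nat) : R := (if i is j.+1 then (M j)%:R else 0) + 1.

Lemma arm_ge1 i : 1 <= arm i.
Proof. by rewrite /arm lerDr; case: i. Qed.

Definition star_dist (i j : nat) : R := if i == j then 0 else arm i + arm j.

Lemma star_dist_ge2 i j : i != j -> 2 <= star_dist i j.
Proof. by rewrite /star_dist => /negbTE ->; have := arm_ge1 i; have := arm_ge1 j; lra. Qed.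

Lemma star_dist_metric : is_metric star_dist.
Proof.
have := arm_ge1; rewrite /star_dist => arm1; split.
- by move=> i j; case: eqP => // _; have := arm1 i; have := arm1 j; lra.
- move=> i j; split => [|->]; last by rewrite eqxx.
  by case: eqP => // _ ij0; exfalso; have := arm1 i; have := arm1 j; lra.
- by move=> i j; rewrite eq_sym; case: eqP => // _; rewrite addrC.
- move=> i j k; have := arm1 i; have := arm1 j; have := arm1 k.
  by do 3 case: eqP => ?; subst => //; lra.
Qed.

Lemma star_dist_complete : d_complete star_dist.
Proof.
move=> u /(_ 1 ltr01)[N uN]; exists (u N) => e e0; exists N => n Nn.
have [->|uNn] := eqVneq (u n) (u N); first by rewrite /star_dist eqxx.
by have := uN n N Nn (leqnn N); have := star_dist_ge2 _ _ uNn; lra.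
Qed.

Lemma star_dist_separable : d_separable star_dist.
Proof. by exists id => i e e0; exists i; rewrite /star_dist eqxx. Qed.

Lemma star_dist_borel : (@measurable _ nat) = <<s d_open star_dist >>.
Proof.
apply/seteqP; split => A _ //; apply: sub_sigma_algebra => i Ai.
exists 1 => // j /= ij; have [<- //|/star_dist_ge2] := eqVneq i j; lra.
Qed.

Definition star_space : mmspace R :=
  MMSpace star_dist_metric star_dist_complete star_dist_separable star_dist_borel
    weight_prob.

Lemma star_space_not_bulk_diam_lt n : ~ bulk_diam_lt (weight n.+1) (M n) star_space.
Proof.
move=> [A [_ wA] [D Dn diamA]].
have A0 : A 0%N.
  apply/not_notP => /(weight_prob_le _ 0); rewrite leNgt => /negP; apply.
  by apply: le_lt_trans wA; rewrite lee_fin lerB // weight_le0.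
have An : A n.+1 by apply/not_notP => /(weight_prob_le _ n.+1); rewrite leNgt => /negP.
by have := diamA _ _ A0 An; rewrite /= /star_dist /arm /=; lra.
Qed.

End star_space.

Theorem corollary1p2 (R : realType) : ~ box_sigma_compact R.
Proof.
move=> [K [K_compact K_cover]].
have /choice[M KM] : forall n, exists M, forall Y, K n Y -> bulk_diam_lt (weight n.+1) M Y.
  by move=> n; apply: box_compact_bulk_diam_bounded => //; exact: weight_gt0.
have [n Kn] := K_cover (star_space M).
exact: star_space_not_bulk_diam_lt (KM n _ Kn).
Qed.
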